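(* Let $\mathbf{a}=(a_1,a_2,a_3,a_4)\in\mathbb C^4$ and let $$S_{\mathbf a}=\{(x_1,x_2,x_3)\in\mathbb C^3 : x_1^2+x_2^2+x_3^2+x_1x_2x_3=a_1x_1+a_2x_2+a_3x_3+a_4\},$$ equipped with the holomorphic symplectic form $$\Omega=\frac{dx_1\wedge dx_2}{2x_3+x_1x_2-a_3}=\frac{dx_2\wedge dx_3}{2x_1+x_2x_3-a_1}=\frac{dx_3\wedge dx_1}{2x_2+x_1x_3-a_2}.$$ Let $\mathcal F_1=\ker(dx_1)$ and $\mathcal F_2=\ker(dx_2)$ restricted to $S_{\mathbf a}$, considered on the open set of smooth points where they are transversal. Then the Hess connection of the bi-Lagrangian manifold $(S_{\mathbf a},\Omega,\mathcal F_1,\mathcal F_2)$ is flat if and only if $\mathbf a=(0,0,0,4)$.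
   Context: A bi-Lagrangian structure on a (holomorphic) symplectic manifold $(M,\omega)$ is a pair of transversal Lagrangian foliations; on a surface, any pair of transversal foliations by curves is bi-Lagrangian. The Hess connection of a bi-Lagrangian manifold $(M,\omega,\mathcal F_1,\mathcal F_2)$ is the unique torsion-free affine connection $\nabla$ on $TM$ such that $X\cdot\omega(Y,Z)=\omega(\nabla_XY,Z)+\omega(Y,\nabla_XZ)$ for all vector fields $X,Y,Z$, and $\nabla_XY$ is tangent to $\mathcal F_j$ whenever $Y$ is tangent to $\mathcal F_j$ ($j=1,2$). It is flat if its curvature $R(X,Y)Z=\nabla_X\nabla_YZ-\nabla_Y\nabla_XZ-\nabla_{[X,Y]}Z$ vanishes identically. *)

From Stdlib Require Import Reals.
From Coquelicot Require Import Coquelicot.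
Open Scope C_scope.

(* Coordinates (x1, x2) on the surface S_a (chart where dx1 /\ dx2 <> 0 on S_a). *)
Inductive idx := I1 | I2.

Definition Fa (a1 a2 a3 a4 x1 x2 x3 : C) : C :=
  x1 * x1 + x2 * x2 + x3 * x3 + x1 * x2 * x3
  - (a1 * x1 + a2 * x2 + a3 * x3 + a4).

Definition pd (i : idx) (f : C * C -> C) (p : C * C) (l : C) : Prop :=
  match i with
  | I1 => is_derive (fun z : C => f (z, snd p)) (fst p) l
  | I2 => is_derive (fun z : C => f (fst p, z)) (snd p) l
  end.

(* f is holomorphic on U (separately holomorphic = holomorphic, Hartogs). *)
Definition holo_on (U : C * C -> Prop) (f : C * C -> C) : Prop :=
  forall p, U p -> forall i, exists l, pd i f p l.

(* (U, h) is a local parametrization of the open part of S_a where F1, F2 are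
   transversal: (x1,x2) in U |-> (x1, x2, h(x1,x2)) in S_a, with
   2 x3 + x1 x2 - a3 = dFa/dx3 <> 0 (equivalently dx1/\dx2 |_{S_a} <> 0). *)
Definition chart (a1 a2 a3 a4 : C) (U : C * C -> Prop) (h : C * C -> C) : Prop :=
  open U /\ holo_on U h /\
  forall p, U p ->
    Fa a1 a2 a3 a4 (fst p) (snd p) (h p) = 0 /\
    2 * h p + fst p * snd p - a3 <> 0.

(* Components of Omega = dx1 /\ dx2 / (2 x3 + x1 x2 - a3) in the chart:
   om i j p = Omega(d_i, d_j) at p. *)
Definition om (a3 : C) (h : C * C -> C) (i j : idx) (p : C * C) : C :=
  match i, j with
  | I1, I2 => / (2 * h p + fst p * snd p - a3)
  | I2, I1 => - / (2 * h p + fst p * snd p - a3)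
  | _, _ => 0
  end.

Definition sum2 (f : idx -> C) : C := f I1 + f I2.

(* An affine connection on U given by its Christoffel symbols:
   nabla_{d_i} d_j = sum_k G k i j * d_k. *)
Definition christoffel := idx -> idx -> idx -> C * C -> C.

(* G is the Hess connection of (S_a, Omega, F1 = ker dx1, F2 = ker dx2) on the
   chart: holomorphic, torsion-free, Omega-parallel, and preserving both
   foliations (F1 is spanned by d_2, F2 by d_1). *)
Definition is_hess (a3 : C) (U : C * C -> Prop) (h : C * C -> C)
    (G : christoffel) : Prop :=
  (forall k i j, holo_on U (G k i j)) /\
  forall p, U p ->
    (forall k i j, G k i j p = G k j i p) /\
    (forall i j l, pd i (om a3 h j l) p
        (sum2 (fun m => G m i j p * om a3 h m l p)
         + sum2 (fun m => G m i l p * om a3 h j m p))) /\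
    (forall i, G I1 i I2 p = 0) /\
    (forall i, G I2 i I1 p = 0).

(* Flatness: R(d_i, d_j) d_k = 0 for all i j k, at every point of U, where
   R^l_{k i j} = d_i G^l_{jk} - d_j G^l_{ik}
                 + sum_m (G^m_{jk} G^l_{im} - G^m_{ik} G^l_{jm}). *)
Definition flat (U : C * C -> Prop) (G : christoffel) : Prop :=
  forall p, U p ->
    exists dG : idx -> idx -> idx -> idx -> C,
      (forall d k i j, pd d (G k i j) p (dG d k i j)) /\
      (forall l k i j,
          dG i l j k - dG j l i k
          + sum2 (fun m => G m j k p * G l i m p - G m i k p * G l j m p) = 0).

From Stdlib Require Import Reals Lra Classical.
From Coquelicot Require Import Coquelicot.
Open Scope C_scope.

(* On the chart (x1, x2) the defining equation of S_a is quadratic in x3, with discriminant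
   Δ = (x1 x2 - a3)^2 - 4 (x1^2 + x2^2 - a1 x1 - a2 x2 - a4), and the denominator
   D = 2 x3 + x1 x2 - a3 of Ω satisfies D^2 = Δ.  Preserving the two coordinate foliations
   kills every Christoffel symbol except Γ^1_11 and Γ^2_22, and Ω-parallelism then forces
   Γ^i_ii = -∂i D / D = -∂i Δ / (2 Δ).  The only curvature left is
   ∂2 Γ^1_11 = ∂1 Γ^2_22 = -(Δ ∂1∂2 Δ - ∂1 Δ ∂2 Δ) / (2 Δ^2), so the Hess connection is
   flat exactly where Q = Δ ∂1∂2 Δ - ∂1 Δ ∂2 Δ vanishes.  For a = (0,0,0,4) one has
   Δ = (4 - x1^2)(4 - x2^2) and Q = 0.  Otherwise Q Δ is a nonzero polynomial, and a branch
   of √Δ near a point where Q Δ does not vanish gives a chart with a non-flat Hess connection. *)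

Lemma Cmult_eq0_r (c x : C) : c <> 0 -> c * x = 0 -> x = 0.
Proof. intros Hc E; replace x with (/ c * (c * x)) by (field; exact Hc); rewrite E; ring. Qed.

Lemma Cmult_reg_inv_r (x y z : C) : z <> 0 -> x * / z = y * / z -> x = y.
Proof.
  intros Hz E; replace x with (x * / z * z) by (field; exact Hz); rewrite E; field; exact Hz.
Qed.

Lemma Re_le_Cmod (z : C) : (Re z <= Cmod z)%R.
Proof. exact (Rle_trans _ _ _ (Rle_abs _) (re_le_Cmod z)). Qed.

Lemma Re_pos_of_near (w y : C) : (Cmod (y - w) < Re w)%R -> (0 < Re y)%R.
Proof.
  intros Hy. assert (T := Re_le_Cmod (w - y)).
  rewrite <- Cmod_opp in T; replace (- (w - y)) with (y - w) in T by ring.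
  replace (Re (w - y)) with (Re w - Re y)%R in T by (destruct w, y; cbn; ring). lra.
Qed.

(** * Holomorphic functions of one variable *)

(* Coquelicot's product rule lives on [AbsRing_NormedModule C_AbsRing], a normed-module
   structure on C distinct from [C_NormedModule]; the two notions of derivative agree. *)
Lemma is_derive_C_of_AbsRing (f : C -> C) (x l : C) :
  @is_derive C_AbsRing (AbsRing_NormedModule C_AbsRing) f x l -> is_derive f x l.
Proof.
  intros [_ H]; split; [apply is_linear_scal_l |].
  intros x' Hx' eps; exact (H x' Hx' eps).
Qed.

Lemma is_derive_C_to_AbsRing (f : C -> C) (x l : C) :
  is_derive f x l -> @is_derive C_AbsRing (AbsRing_NormedModule C_AbsRing) f x l.
Proof.
  intros [_ H]; split; [apply is_linear_scal_l |].
  intros x' Hx' eps; exact (H x' Hx' eps).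
Qed.

Lemma is_derive_C_eq (f : C -> C) (x l l' : C) :
  is_derive f x l -> l = l' -> is_derive f x l'.
Proof. now intros H <-. Qed.

Lemma is_derive_C_const (a x : C) : is_derive (fun _ : C => a) x (RtoC 0).
Proof. exact (@is_derive_const C_AbsRing C_NormedModule a x). Qed.

Lemma is_derive_C_id (x : C) : is_derive (fun z : C => z) x (RtoC 1).
Proof. apply is_derive_C_of_AbsRing; exact (@is_derive_id C_AbsRing x). Qed.

Lemma is_derive_Cplus (f g : C -> C) (x df dg : C) :
  is_derive f x df -> is_derive g x dg -> is_derive (fun z => f z + g z) x (df + dg).
Proof. exact (@is_derive_plus C_AbsRing C_NormedModule f g x df dg). Qed.

Lemma is_derive_Copp (f : C -> C) (x df : C) :
  is_derive f x df -> is_derive (fun z => - f z) x (- df).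
Proof. exact (@is_derive_opp C_AbsRing C_NormedModule f x df). Qed.

Lemma is_derive_Cminus (f g : C -> C) (x df dg : C) :
  is_derive f x df -> is_derive g x dg -> is_derive (fun z => f z - g z) x (df - dg).
Proof. exact (@is_derive_minus C_AbsRing C_NormedModule f g x df dg). Qed.

Lemma is_derive_Cmult (f g : C -> C) (x df dg : C) :
  is_derive f x df -> is_derive g x dg ->
  is_derive (fun z => f z * g z) x (df * g x + f x * dg).
Proof.
  intros Hf Hg; apply is_derive_C_of_AbsRing.
  exact (is_derive_mult f g x df dg (is_derive_C_to_AbsRing _ _ _ Hf)
           (is_derive_C_to_AbsRing _ _ _ Hg) Cmult_comm).
Qed.

Lemma is_derive_C_comp (f g : C -> C) (x df dg : C) :
  is_derive f (g x) df -> is_derive g x dg -> is_derive (fun z => f (g z)) x (dg * df).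
Proof.
  intros Hf Hg.
  exact (@is_derive_comp C_AbsRing C_NormedModule f g x df dg Hf (is_derive_C_to_AbsRing _ _ _ Hg)).
Qed.

Lemma is_derive_C_ext_loc (f g : C -> C) (x l : C) :
  @locally C_UniformSpace x (fun t => f t = g t) -> is_derive f x l -> is_derive g x l.
Proof.
  intros Hfg; apply (@is_derive_ext_loc C_AbsRing C_NormedModule f g x l), locally_C, Hfg.
Qed.

Lemma is_derive_C_quadratic (f : C -> C) (x l : C) (d K : R) : (0 < d)%R -> (0 <= K)%R ->
  (forall y, (Cmod (y - x) < d)%R ->
     (Cmod (f y - f x - (y - x) * l) <= K * Cmod (y - x) ^ 2)%R) ->
  is_derive f x l.
Proof.
  intros Hd HK H; split; [apply is_linear_scal_l |].
  intros x' Hx' eps.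
  apply (@is_filter_lim_locally_unique _ (AbsRing_NormedModule C_AbsRing)) in Hx'; subst x'.
  assert (Hr : (0 < Rmin d (eps / (K + 1)))%R).
  { apply Rmin_pos; [exact Hd | apply Rdiv_lt_0_compat; [apply cond_pos | lra]]. }
  exists (mkposreal _ Hr); intros y Hy.
  change (Cmod (y - x) < Rmin d (eps / (K + 1)))%R in Hy.
  change (Cmod (f y - f x - (y - x) * l) <= eps * Cmod (y - x))%R.
  assert (Hm := Cmod_ge_0 (y - x)).
  assert (Hyd : (Cmod (y - x) < d)%R) by (eapply Rlt_le_trans; [exact Hy | apply Rmin_l]).
  assert (Hye : (Cmod (y - x) * (K + 1) <= eps)%R).
  { apply Rle_trans with (eps / (K + 1) * (K + 1))%R.
    - apply Rmult_le_compat_r; [lra |]. eapply Rlt_le, Rlt_le_trans; [exact Hy | apply Rmin_r].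
    - right; field; lra. }
  eapply Rle_trans; [exact (H y Hyd) |]. simpl. nra.
Qed.

Lemma is_derive_Cinv_id (z0 : C) : z0 <> 0 -> is_derive Cinv z0 (- / (z0 * z0)).
Proof.
  intros Hz.
  assert (Ha : (0 < Cmod z0)%R) by (apply Cmod_gt_0; exact Hz).
  apply (is_derive_C_quadratic _ _ _ (Cmod z0 / 2) (2 / Cmod z0 ^ 3)).
  - lra.
  - apply Rlt_le, Rdiv_lt_0_compat; [lra | apply pow_lt; lra].
  - intros y Hy.
    assert (Hb : (Cmod z0 / 2 < Cmod y)%R).
    { assert (T := Cmod_triangle (z0 - y) y).
      replace (z0 - y + y) with z0 in T by ring.
      replace (z0 - y) with (- (y - z0)) in T by ring. rewrite Cmod_opp in T. lra. }
    assert (Hy0 : y <> 0) by (intros ->; rewrite Cmod_0 in Hb; lra).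
    replace (/ y - / z0 - (y - z0) * - / (z0 * z0))
      with ((y - z0) * (y - z0) / (y * (z0 * z0))) by (field; auto).
    rewrite Cmod_div by (repeat apply Cmult_neq_0; auto).
    rewrite !Cmod_mult.
    set (m := Cmod (y - z0)) in *; set (a := Cmod z0) in *; set (b := Cmod y) in *.
    assert (Hinv : (/ (b * (a * a)) <= 2 / a ^ 3)%R).
    { replace (2 / a ^ 3)%R with (/ (a * a * a / 2))%R by (field; lra).
      assert (Ha2 : (0 < a * a)%R) by nra.
      apply Rinv_le_contravar; nra. }
    unfold Rdiv; replace (m * m)%R with (m ^ 2)%R by ring.
    rewrite Rmult_comm. apply Rmult_le_compat_r; [apply pow2_ge_0 | exact Hinv].
Qed.

Lemma is_derive_Cinv (f : C -> C) (x df : C) :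
  is_derive f x df -> f x <> 0 -> is_derive (fun z => / f z) x (- df / (f x * f x)).
Proof.
  intros Hf Hx. eapply is_derive_C_eq.
  - apply (is_derive_C_comp Cinv f); [apply is_derive_Cinv_id; exact Hx | exact Hf].
  - field; exact Hx.
Qed.

Definition Csqrt (z : C) : C :=
  (sqrt ((Cmod z + Re z) / 2), Im z / (2 * sqrt ((Cmod z + Re z) / 2)))%R.

Lemma Csqrt_sqr (z : C) : (0 < Cmod z + Re z)%R -> Csqrt z * Csqrt z = z.
Proof.
  destruct z as [x y]; unfold Csqrt, Cmod, Re, Im; cbn [fst snd]; intros Hp.
  set (t := sqrt (x ^ 2 + y ^ 2)) in *.
  assert (Ht : (t * t = x * x + y * y)%R) by (unfold t; rewrite sqrt_sqrt; nra).
  set (s := sqrt ((t + x) / 2)).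
  assert (Hs : (s * s = (t + x) / 2)%R) by (unfold s; rewrite sqrt_sqrt; lra).
  assert (Hs0 : (0 < s)%R) by (unfold s; apply sqrt_lt_R0; lra).
  unfold Cmult; cbn [fst snd]; f_equal; [| field; lra].
  replace (s * s - y / (2 * s) * (y / (2 * s)))%R
    with ((4 * (s * s) * (s * s) - y * y) / (4 * (s * s)))%R by (field; lra).
  rewrite Hs. field_simplify; [| lra].
  replace (y ^ 2)%R with (t * t - x * x)%R by (rewrite Ht; ring). field; lra.
Qed.

Lemma Re_Csqrt_pos (z : C) : (0 < Re z)%R -> (0 < Re (Csqrt z))%R.
Proof.
  intros H; apply sqrt_lt_R0.
  assert (T := Re_le_Cmod z); lra.
Qed.

Lemma is_derive_C_sqrt_branch (r : C -> C) (z0 : C) (d : R) : (0 < d)%R ->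
  (forall y, (Cmod (y - z0) < d)%R -> r y * r y = y /\ (0 < Re (r y))%R) ->
  is_derive r z0 (/ (2 * r z0)).
Proof.
  intros Hd H.
  destruct (H z0) as [Hsq0 Hre0].
  { replace (z0 - z0) with (RtoC 0) by ring; rewrite Cmod_0; lra. }
  set (s0 := Re (r z0)) in *.
  assert (Hm0 : (s0 <= Cmod (r z0))%R) by apply Re_le_Cmod.
  assert (Hr0 : r z0 <> 0) by (apply Cmod_gt_0; lra).
  apply (is_derive_C_quadratic _ _ _ d (/ (2 * s0 ^ 2 * Cmod (r z0)))); [exact Hd | |].
  { apply Rlt_le, Rinv_0_lt_compat. assert (0 < s0 ^ 2)%R by (apply pow_lt; lra). nra. }
  intros y Hy. destruct (H y Hy) as [Hsq Hre].
  assert (Hsum : (s0 < Cmod (r y + r z0))%R).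
  { eapply Rlt_le_trans; [| exact (Re_le_Cmod _)].
    rewrite re_plus; unfold s0 in *; lra. }
  assert (Hnz : r y + r z0 <> 0) by (apply Cmod_gt_0; lra).
  (* r y - r z0 = (y - z0) / (r y + r z0) makes the remainder quadratic in y - z0. *)
  assert (Hrem : forall u v : C, u + v <> 0 -> v <> 0 ->
    u - v - (u * u - v * v) * / (2 * v)
    = - ((u * u - v * v) * (u * u - v * v)) / ((u + v) * (u + v) * (2 * v))).
  { intros u v Huv Hv; field; repeat split; auto; intro E; injection E; lra. }
  replace (y - z0) with (r y * r y - r z0 * r z0) by now rewrite Hsq, Hsq0.
  rewrite (Hrem _ _ Hnz Hr0).
  unfold Cdiv. rewrite Cmod_mult, Cmod_opp, Cmod_inv
    by (repeat apply Cmult_neq_0; auto; intro E; injection E; lra).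
  rewrite !Cmod_mult, Cmod_R, Rabs_pos_eq by lra.
  set (m := Cmod (r y * r y - r z0 * r z0)) in *.
  set (q := Cmod (r y + r z0)) in *; set (b := Cmod (r z0)) in *.
  assert (0 < s0 ^ 2)%R by (apply pow_lt; lra).
  replace (m * m)%R with (m ^ 2)%R by ring.
  rewrite (Rmult_comm _ (m ^ 2)). apply Rmult_le_compat_l; [apply pow2_ge_0 |].
  apply Rinv_le_contravar; [nra |].
  assert (s0 * s0 <= q * q)%R by nra. simpl. nra.
Qed.

Lemma is_derive_Csqrt (z : C) : (0 < Re z)%R -> is_derive Csqrt z (/ (2 * Csqrt z)).
Proof.
  intros Hz. apply (is_derive_C_sqrt_branch Csqrt z (Re z) Hz).
  intros y Hy.
  assert (Hy' := Re_pos_of_near z y Hy).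
  split; [apply Csqrt_sqr | exact (Re_Csqrt_pos y Hy')].
  assert (T := Re_le_Cmod y); lra.
Qed.

Lemma Csqrt_exists (c : C) : exists s, s * s = c.
Proof.
  destruct (Ceq_dec c 0) as [-> | Hc]; [exists (RtoC 0); ring |].
  assert (Hm : (0 < Cmod c)%R) by (apply Cmod_gt_0; exact Hc).
  destruct (Rlt_or_le 0 (Cmod c + Re c)) as [H | H].
  - exists (Csqrt c); apply Csqrt_sqr, H.
  - (* c is a negative real, so -c has a principal root *)
    exists (Ci * Csqrt (- c)).
    transitivity (Ci * Ci * (Csqrt (- c) * Csqrt (- c))); [ring |].
    rewrite Csqrt_sqr by (rewrite Cmod_opp, re_opp; lra).
    apply injective_projections; cbn; ring.
Qed.

Lemma Csqrt_rescaled (c s w : C) : c <> 0 -> s * s = c -> (0 < Re (/ c * w))%R ->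
  s * Csqrt (/ c * w) * (s * Csqrt (/ c * w)) = w /\ s * Csqrt (/ c * w) <> 0.
Proof.
  intros Hc Hs Hw.
  assert (Hsq : s * Csqrt (/ c * w) * (s * Csqrt (/ c * w)) = w).
  { transitivity (s * s * (Csqrt (/ c * w) * Csqrt (/ c * w))); [ring |].
    rewrite Csqrt_sqr, Hs by (assert (T := Re_le_Cmod (/ c * w)); lra).
    field; exact Hc. }
  split; [exact Hsq |]. intros E; rewrite E, Cmult_0_l in Hsq.
  rewrite <- Hsq, Cmult_0_r in Hw; cbn in Hw; lra.
Qed.

Lemma is_derive_Csqrt_comp (f : C -> C) (x df : C) :
  is_derive f x df -> (0 < Re (f x))%R ->
  is_derive (fun z => Csqrt (f z)) x (df * / (2 * Csqrt (f x))).
Proof. intros Hf Hx; apply is_derive_C_comp; [apply is_derive_Csqrt, Hx | exact Hf]. Qed.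

Lemma is_derive_Cmult_l (a x : C) : is_derive (Cmult a) x a.
Proof.
  eapply is_derive_C_eq; [apply (is_derive_Cmult (fun _ => a) (fun z => z)) |].
  - apply is_derive_C_const.
  - apply is_derive_C_id.
  - cbv beta; ring.
Qed.

(* [Cmult a] is the eta-reduced form in which [fun z => a * z] may appear. *)
Ltac is_derive_C_step :=
  match goal with
  | |- is_derive (Cmult _) _ _ => apply is_derive_Cmult_l
  | |- is_derive (fun _ => ?a) _ _ => apply is_derive_C_const
  | |- is_derive (fun z => z) _ _ => apply is_derive_C_id
  | |- is_derive (fun z => _ + _) _ _ => apply is_derive_Cplus
  | |- is_derive (fun z => _ - _) _ _ => apply is_derive_Cminus
  | |- is_derive (fun z => - _) _ _ => apply is_derive_Copp
  | |- is_derive (fun z => _ * _) _ _ => apply is_derive_Cmult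
  | |- is_derive (fun z => _ / _) _ _ => unfold Cdiv
  | |- is_derive (fun z => / _) _ _ => apply is_derive_Cinv
  | |- is_derive (fun z => Csqrt _) _ _ => apply is_derive_Csqrt_comp
  end.

(** * Partial derivatives on C * C *)

Definition pderive (i : idx) (f : C * C -> C) (p : C * C) : C :=
  match i with
  | I1 => C_derive (fun z => f (z, snd p)) (fst p)
  | I2 => C_derive (fun z => f (fst p, z)) (snd p)
  end.

Lemma pderive_eq (i : idx) (f : C * C -> C) (p : C * C) (l : C) :
  pd i f p l -> pderive i f p = l.
Proof. destruct i; apply is_C_derive_unique. Qed.

Lemma pd_pderive (i : idx) (f : C * C -> C) (p : C * C) (l : C) :
  pd i f p l -> pd i f p (pderive i f p).
Proof. intros H; now rewrite (pderive_eq _ _ _ _ H). Qed.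

Lemma pd_unique (i : idx) (f : C * C -> C) (p : C * C) (l l' : C) :
  pd i f p l -> pd i f p l' -> l = l'.
Proof. intros H H'; now rewrite <- (pderive_eq _ _ _ _ H), (pderive_eq _ _ _ _ H'). Qed.

Lemma pd_eq (i : idx) (f : C * C -> C) (p : C * C) (l l' : C) :
  pd i f p l -> l = l' -> pd i f p l'.
Proof. now intros H <-. Qed.

Lemma pd_const (i : idx) (c : C) (p : C * C) : pd i (fun _ => c) p (RtoC 0).
Proof. destruct i; apply is_derive_C_const. Qed.

Lemma pd_opp (i : idx) (f : C * C -> C) (p : C * C) (l : C) :
  pd i f p l -> pd i (fun q => - f q) p (- l).
Proof. destruct i; apply is_derive_Copp. Qed.

Lemma pd_mult (i : idx) (f g : C * C -> C) (p : C * C) (lf lg : C) :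
  pd i f p lf -> pd i g p lg -> pd i (fun q => f q * g q) p (lf * g p + f p * lg).
Proof. destruct i, p; apply is_derive_Cmult. Qed.

Lemma pd_inv (i : idx) (f : C * C -> C) (p : C * C) (l : C) :
  pd i f p l -> f p <> 0 -> pd i (fun q => / f q) p (- l / (f p * f p)).
Proof. destruct i, p; apply is_derive_Cinv. Qed.

Lemma pd_ext_loc (U : C * C -> Prop) (i : idx) (f g : C * C -> C) (p : C * C) (l : C) :
  open U -> U p -> (forall q, U q -> f q = g q) -> pd i f p l -> pd i g p l.
Proof.
  intros HU Hp Hfg. destruct (HU p Hp) as [eps Heps].
  destruct i; apply is_derive_C_ext_loc; exists eps; intros z Hz; apply Hfg, Heps;
    split; (exact Hz || apply ball_center).
Qed.

Definition C2_UniformSpace := prod_UniformSpace C_UniformSpace C_UniformSpace.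
Definition C_AbsRing_UniformSpace := AbsRing_UniformSpace C_AbsRing.

Lemma continuous_C2_fst (q : C * C) : @continuous C2_UniformSpace C_AbsRing_UniformSpace fst q.
Proof. destruct q as [x y]; intros P HP; apply (continuous_fst x y), locally_C, HP. Qed.

Lemma continuous_C2_snd (q : C * C) : @continuous C2_UniformSpace C_AbsRing_UniformSpace snd q.
Proof. destruct q as [x y]; intros P HP; apply (continuous_snd x y), locally_C, HP. Qed.

Ltac continuous_C2_step :=
  match goal with
  | |- continuous (fun _ => _) _ => apply continuous_const
  | |- continuous fst _ => apply continuous_C2_fst
  | |- continuous snd _ => apply continuous_C2_snd
  | |- continuous (fun q => _ + _) _ =>
      apply (@continuous_plus C2_UniformSpace C_AbsRing (AbsRing_NormedModule C_AbsRing))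
  | |- continuous (fun q => _ - _) _ =>
      apply (@continuous_minus C2_UniformSpace C_AbsRing (AbsRing_NormedModule C_AbsRing))
  | |- continuous (fun q => _ * _) _ => apply (@continuous_mult C2_UniformSpace C_AbsRing)
  end.

Lemma open_Re_pos : @open C_AbsRing_UniformSpace (fun w : C => (0 < Re w)%R).
Proof.
  intros w Hw. exists (mkposreal _ Hw). intros y Hy. exact (Re_pos_of_near w y Hy).
Qed.

Lemma flat_ext (U : C * C -> Prop) (G G' : christoffel) : open U ->
  (forall k i j q, U q -> G k i j q = G' k i j q) -> flat U G -> flat U G'.
Proof.
  intros HU HGG' Hflat p Hp. destruct (Hflat p Hp) as (dG & HdG & Hcurv).
  exists dG; split.
  - intros d k i j; apply (pd_ext_loc U d (G k i j)); auto.
  - intros l k i j; specialize (Hcurv l k i j); unfold sum2 in *.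
    now rewrite !HGG' in Hcurv by exact Hp.
Qed.

(** * The Hess connection of S_a *)

Section Surface.

Variables a1 a2 a3 a4 : C.

Definition discr (q : C * C) : C :=
  (fst q * snd q - a3) * (fst q * snd q - a3)
  - 4 * (fst q * fst q + snd q * snd q - a1 * fst q - a2 * snd q - a4).

Definition discr_d (i : idx) (q : C * C) : C :=
  match i with
  | I1 => 2 * (fst q * snd q - a3) * snd q - 8 * fst q + 4 * a1
  | I2 => 2 * (fst q * snd q - a3) * fst q - 8 * snd q + 4 * a2
  end.

Definition discr_dd (i j : idx) (q : C * C) : C :=
  match i, j with
  | I1, I1 => 2 * snd q * snd q - 8
  | I2, I2 => 2 * fst q * fst q - 8
  | _, _ => 4 * fst q * snd q - 2 * a3
  end.

Definition curvature_num (q : C * C) : C :=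
  discr q * discr_dd I1 I2 q - discr_d I1 q * discr_d I2 q.

Definition hess_gamma (i : idx) (q : C * C) : C := - discr_d i q / (2 * discr q).

Definition hess_symbols : christoffel := fun k i j q =>
  match k, i, j with
  | I1, I1, I1 => hess_gamma I1 q
  | I2, I2, I2 => hess_gamma I2 q
  | _, _, _ => 0
  end.

Lemma Fa_discr (q : C * C) (x3 : C) :
  4 * Fa a1 a2 a3 a4 (fst q) (snd q) x3
  = (2 * x3 + fst q * snd q - a3) * (2 * x3 + fst q * snd q - a3) - discr q.
Proof. unfold Fa, discr; ring. Qed.

Lemma pd_discr (i : idx) (p : C * C) : pd i discr p (discr_d i p).
Proof.
  destruct i, p as [x1 x2]; cbn [pd fst snd]; unfold discr; cbn [fst snd];
    (eapply is_derive_C_eq; [repeat is_derive_C_step | cbn [discr_d fst snd]; ring]).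
Qed.

Lemma pd_discr_d (i j : idx) (p : C * C) : pd i (discr_d j) p (discr_dd i j p).
Proof.
  destruct i, j, p as [x1 x2]; cbn [pd discr_d fst snd];
    (eapply is_derive_C_eq; [repeat is_derive_C_step | cbn [discr_dd fst snd]; ring]).
Qed.

Lemma pd_hess_gamma (i j : idx) (p : C * C) : discr p <> 0 ->
  pd i (hess_gamma j) p
    (- (discr p * discr_dd i j p - discr_d i p * discr_d j p) / (2 * discr p * discr p)).
Proof.
  intros Hp. unfold hess_gamma, Cdiv. eapply pd_eq.
  - apply pd_mult; [apply pd_opp, pd_discr_d |].
    apply pd_inv; [apply pd_mult; [apply pd_const | apply pd_discr] |].
    apply Cmult_neq_0; [injection; lra | exact Hp].
  - cbv beta; field; exact Hp.
Qed.

Lemma holo_on_hess_symbols (U : C * C -> Prop) :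
  (forall q, U q -> discr q <> 0) -> forall k i j, holo_on U (hess_symbols k i j).
Proof.
  intros Hdiscr k i j p Hp d.
  unfold hess_symbols; destruct k, i, j; cbv beta iota; eexists;
    match goal with
    | |- pd _ (fun _ => _) _ _ => apply pd_const
    | |- _ => apply pd_hess_gamma, Hdiscr, Hp
    end.
Qed.

Lemma flat_hess_symbols_iff (U : C * C -> Prop) :
  (forall q, U q -> discr q <> 0) ->
  flat U hess_symbols <-> forall q, U q -> curvature_num q = 0.
Proof.
  intros Hdiscr.
  assert (Hcross : forall p, U p ->
    pd I2 (hess_gamma I1) p (- curvature_num p / (2 * discr p * discr p)) /\
    pd I1 (hess_gamma I2) p (- curvature_num p / (2 * discr p * discr p))).
  { intros p Hp; unfold curvature_num;
    split; (eapply pd_eq; [apply pd_hess_gamma, Hdiscr, Hp | cbn [discr_dd]; unfold Cdiv; ring]). }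
  split.
  - intros Hflat p Hp. destruct (Hflat p Hp) as (dG & HdG & Hcurv).
    specialize (Hcurv I1 I1 I1 I2); unfold sum2 in Hcurv; cbn [hess_symbols] in Hcurv.
    rewrite (pd_unique _ _ _ _ _ (HdG I1 I1 I2 I1) (pd_const I1 0 p)),
      (pd_unique _ _ _ _ _ (HdG I2 I1 I1 I1) (proj1 (Hcross p Hp))) in Hcurv.
    assert (Hq : curvature_num p / (2 * discr p * discr p) = 0)
      by (eapply eq_trans; [| exact Hcurv]; unfold Cdiv; ring).
    replace (curvature_num p)
      with (2 * discr p * discr p * (curvature_num p / (2 * discr p * discr p)))
      by (field; apply Hdiscr, Hp).
    rewrite Hq; ring.
  - intros HQ p Hp.
    exists (fun d k i j => pderive d (hess_symbols k i j) p); split.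
    { intros d k i j. destruct (holo_on_hess_symbols U Hdiscr k i j p Hp d) as [l Hl].
      exact (pd_pderive _ _ _ _ Hl). }
    assert (H0 : forall d, pderive d (fun _ => 0) p = 0)
      by (intros d; apply pderive_eq, pd_const).
    destruct (Hcross p Hp) as [H21 H12].
    apply (pderive_eq I2 (hess_symbols I1 I1 I1)) in H21.
    apply (pderive_eq I1 (hess_symbols I2 I2 I2)) in H12.
    rewrite HQ in H21, H12 by exact Hp.
    intros l k i j; unfold sum2; destruct l, k, i, j; cbn [hess_symbols];
      rewrite ?H0, ?H21, ?H12; unfold Cdiv; ring.
Qed.

Section Chart.

Variables (U : C * C -> Prop) (h : C * C -> C).
Hypothesis Hchart : chart a1 a2 a3 a4 U h.

Definition omega_den (q : C * C) : C := 2 * h q + fst q * snd q - a3.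

Lemma chart_omega_den_neq0 (p : C * C) : U p -> omega_den p <> 0.
Proof. destruct Hchart as (_ & _ & Hc); intros Hp; apply (Hc p Hp). Qed.

Lemma chart_omega_den_sqr (p : C * C) : U p -> omega_den p * omega_den p = discr p.
Proof.
  destruct Hchart as (_ & _ & Hc); intros Hp.
  assert (E := Fa_discr p (h p)); rewrite (proj1 (Hc p Hp)) in E.
  apply Ceq_minus; unfold omega_den; rewrite <- E; ring.
Qed.

Lemma chart_discr_neq0 (p : C * C) : U p -> discr p <> 0.
Proof.
  intros Hp; rewrite <- chart_omega_den_sqr by exact Hp.
  apply Cmult_neq_0; apply chart_omega_den_neq0, Hp.
Qed.

Lemma chart_ex_pd_omega_den (i : idx) (p : C * C) : U p -> exists l, pd i omega_den p l.
Proof.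
  destruct Hchart as (_ & Hh & _); intros Hp; destruct (Hh p Hp i) as [lh Hlh].
  destruct i, p as [x1 x2]; cbn [pd fst snd] in *; unfold omega_den; cbn [fst snd];
    eexists; repeat first [exact Hlh | is_derive_C_step].
Qed.

(* Differentiating [omega_den^2 = discr] gives [2 omega_den ∂i omega_den = ∂i discr]. *)
Lemma chart_pd_inv_omega_den (i : idx) (p : C * C) : U p ->
  pd i (fun q => / omega_den q) p (hess_gamma i p * / omega_den p).
Proof.
  destruct Hchart as (HU & _ & _); intros Hp.
  destruct (chart_ex_pd_omega_den i p Hp) as [l Hl].
  assert (Hsq : pd i discr p (l * omega_den p + omega_den p * l)).
  { apply (pd_ext_loc U i (fun q => omega_den q * omega_den q)); auto.
    - exact chart_omega_den_sqr.
    - apply pd_mult; exact Hl. }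
  assert (Hdiscr_d := pd_unique _ _ _ _ _ Hsq (pd_discr i p)).
  assert (Hd := chart_omega_den_neq0 p Hp).
  eapply pd_eq; [apply pd_inv; [exact Hl | exact Hd] |].
  unfold hess_gamma; rewrite <- Hdiscr_d, <- (chart_omega_den_sqr p Hp).
  field; exact Hd.
Qed.

Lemma hess_symbols_is_hess : is_hess a3 U h hess_symbols.
Proof.
  split; [apply holo_on_hess_symbols, chart_discr_neq0 |].
  intros p Hp; split; [intros k i j; destruct k, i, j; reflexivity |].
  split; [| split; intros i; destruct i; reflexivity].
  intros i j l. assert (Hinv := chart_pd_inv_omega_den i p Hp); unfold omega_den in Hinv.
  unfold sum2, om; destruct i, j, l; cbv beta iota; cbn [hess_symbols];
    first [ eapply pd_eq; [apply pd_const | ring]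
          | eapply pd_eq; [exact Hinv | ring]
          | eapply pd_eq; [apply pd_opp, Hinv | ring] ].
Qed.

Lemma hess_symbols_unique (G : christoffel) : is_hess a3 U h G ->
  forall k i j p, U p -> G k i j p = hess_symbols k i j p.
Proof.
  intros [_ HG] k i j p Hp. destruct (HG p Hp) as (Hsym & Hpar & H1 & H2).
  assert (Hdiag : forall i, G i i i p = hess_gamma i p).
  { intros i'. assert (E := pd_unique _ _ _ _ _ (Hpar i' I1 I2) (chart_pd_inv_omega_den i' p Hp)).
    assert (Hd := chart_omega_den_neq0 p Hp); unfold omega_den in Hd, E.
    unfold sum2, om in E; destruct i'; cbv beta iota in E;
      [rewrite (Hsym I2 I1 I2), H1, !H2 in E | rewrite (Hsym I1 I2 I1), !H1, H2 in E];
      (apply (Cmult_reg_inv_r _ _ _ Hd); rewrite <- E; ring). }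
  destruct k, i, j; cbn [hess_symbols];
    first [apply Hdiag | apply H1 | apply H2 | rewrite Hsym; first [apply H1 | apply H2]].
Qed.

Lemma hess_flat_iff (G : christoffel) : is_hess a3 U h G ->
  flat U G <-> forall p, U p -> curvature_num p = 0.
Proof.
  intros HG. destruct Hchart as (HU & _ & _).
  rewrite <- (flat_hess_symbols_iff U chart_discr_neq0).
  split; apply flat_ext; auto; intros k i j q Hq;
    [| symmetry]; exact (hess_symbols_unique G HG k i j q Hq).
Qed.

End Chart.

Lemma chart_exists (b : C * C) : discr b <> 0 ->
  exists U h, chart a1 a2 a3 a4 U h /\ U b.
Proof.
  intros Hb. destruct (Csqrt_exists (discr b)) as [s Hs].
  set (S := fun q => s * Csqrt (/ discr b * discr q)).
  exists (fun q => 0 < Re (/ discr b * discr q))%R,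
    (fun q => (S q - (fst q * snd q - a3)) / 2).
  split; [split; [| split] |].
  - apply (@open_comp C2_UniformSpace C_AbsRing_UniformSpace
             (fun q => / discr b * discr q) (fun w => 0 < Re w)%R).
    + intros q _.
      change (@continuous C2_UniformSpace C_AbsRing_UniformSpace
                (fun q => / discr b * discr q) q).
      unfold discr; repeat continuous_C2_step.
    + exact open_Re_pos.
  - intros [x1 x2] Hx i; unfold S; destruct i; eexists; cbn [pd fst snd];
      repeat match goal with
      | |- is_derive (fun z => discr (z, ?y)) ?x _ => apply (pd_discr I1 (x, y))
      | |- is_derive (fun z => discr (?x, z)) ?y _ => apply (pd_discr I2 (x, y))
      | |- _ => is_derive_C_step
      end; cbv beta; first [exact Hx | injection; lra].
  - intros q Hq; cbv beta.
    destruct (Csqrt_rescaled (discr b) s (discr q) Hb Hs Hq) as [Hsq Hnz].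
    assert (Hden : 2 * ((S q - (fst q * snd q - a3)) / 2) + fst q * snd q - a3 = S q)
      by field.
    split; [| rewrite Hden; exact Hnz].
    apply (Cmult_eq0_r 4); [injection; lra |].
    rewrite Fa_discr, Hden; exact (proj1 (Ceq_minus _ _) Hsq).
  - cbv beta. rewrite Cinv_l by exact Hb; cbn; lra.
Qed.

End Surface.

Lemma exists_curvature_num_discr_neq0 (a1 a2 a3 a4 : C) :
  ~ (a1 = 0 /\ a2 = 0 /\ a3 = 0 /\ a4 = 4) ->
  exists b, curvature_num a1 a2 a3 a4 b <> 0 /\ discr a1 a2 a3 a4 b <> 0.
Proof.
  intros Ha. apply NNPP; intros Hno; apply Ha.
  set (P := fun a1 a2 a3 a4 x1 x2 : C =>
    curvature_num a1 a2 a3 a4 (x1, x2) * discr a1 a2 a3 a4 (x1, x2)).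
  assert (H : forall x1 x2, P a1 a2 a3 a4 x1 x2 = 0).
  { intros x1 x2; unfold P.
    destruct (Ceq_dec (curvature_num a1 a2 a3 a4 (x1, x2)) 0) as [E | E]; [rewrite E; ring |].
    destruct (Ceq_dec (discr a1 a2 a3 a4 (x1, x2)) 0) as [E' | E']; [rewrite E'; ring |].
    exfalso; apply Hno; exists (x1, x2); auto. }
  (* Finite differences of [P] along the lines x1 = 0, x2 = 0 and x1 = 1 isolate
     the coefficients a3, a1, a2 and a4 - 4 of its top-degree terms. *)
  assert (Ha3 : a3 = 0).
  { apply (Cmult_eq0_r 768); [injection; lra |].
    transitivity (P a1 a2 a3 a4 0 0 - 4 * P a1 a2 a3 a4 0 1 + 6 * P a1 a2 a3 a4 0 2
                  - 4 * P a1 a2 a3 a4 0 3 + P a1 a2 a3 a4 0 4);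
      [unfold P, curvature_num, discr, discr_d, discr_dd; cbn [fst snd]; ring | rewrite !H; ring]. }
  subst a3.
  assert (Ha1 : a1 = 0).
  { apply (Cmult_eq0_r (-768)); [injection; lra |].
    transitivity (- P a1 a2 0 a4 0 0 + 3 * P a1 a2 0 a4 0 1 - 3 * P a1 a2 0 a4 0 2
                  + P a1 a2 0 a4 0 3);
      [unfold P, curvature_num, discr, discr_d, discr_dd; cbn [fst snd]; ring | rewrite !H; ring]. }
  subst a1.
  assert (Ha2 : a2 = 0).
  { apply (Cmult_eq0_r (-768)); [injection; lra |].
    transitivity (- P 0 a2 0 a4 0 0 + 3 * P 0 a2 0 a4 1 0 - 3 * P 0 a2 0 a4 2 0
                  + P 0 a2 0 a4 3 0);
      [unfold P, curvature_num, discr, discr_d, discr_dd; cbn [fst snd]; ring | rewrite !H; ring]. }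
  subst a2.
  do 3 (split; [reflexivity |]).
  apply Ceq_minus, (Cmult_eq0_r (-288)); [injection; lra |].
  transitivity (- P 0 0 0 a4 1 0 + 3 * P 0 0 0 a4 1 1 - 3 * P 0 0 0 a4 1 2 + P 0 0 0 a4 1 3);
    [unfold P, curvature_num, discr, discr_d, discr_dd; cbn [fst snd]; ring | rewrite !H; ring].
Qed.

(* For a = (0,0,0,4) the discriminant factors as (4 - x1^2)(4 - x2^2). *)
Lemma curvature_num_0004 (q : C * C) : curvature_num 0 0 0 4 q = 0.
Proof. unfold curvature_num, discr, discr_d, discr_dd; ring. Qed.

Theorem theorem1p2 (a1 a2 a3 a4 : C) :
  (forall (U : C * C -> Prop) (h : C * C -> C), chart a1 a2 a3 a4 U h ->
     forall G : christoffel, is_hess a3 U h G -> flat U G)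
  <-> (a1 = 0 /\ a2 = 0 /\ a3 = 0 /\ a4 = 4).
Proof.
  split.
  - intros Hflat. apply NNPP; intros Ha.
    destruct (exists_curvature_num_discr_neq0 _ _ _ _ Ha) as (b & Hcurv & Hb).
    destruct (chart_exists _ _ _ _ b Hb) as (U & h & Hchart & HUb).
    assert (HG := hess_symbols_is_hess _ _ _ _ _ _ Hchart).
    exact (Hcurv (proj1 (hess_flat_iff _ _ _ _ _ _ Hchart _ HG) (Hflat U h Hchart _ HG) b HUb)).
  - intros (-> & -> & -> & ->) U h Hchart G HG.
    apply (hess_flat_iff _ _ _ _ _ _ Hchart G HG).
    intros p _; apply curvature_num_0004.
Qed.
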